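(* Let $n=2$ and consider the infinite-horizon LTI primary problem in the context with scalar input, whose optimal closed-loop matrix $M+N\Theta$ is over-damped. Let $\lambda_1$ be a real eigenvalue of $M+N\Theta$ with right eigenvector $V_1$, and let the closed loop be initialised at this single real mode ($x(t_0)=V_1$, $x(t)=V_1e^{\lambda_1t}$). If every eigenvalue $\bar\lambda$ of $\lambda_1I+M$ satisfies $\mathrm{Re}(\bar\lambda)<0$, then the hard-constrained IOC problem (with $c_3=E$ known) does not converge to the true weights.
   Context: Primary LTI problem: minimize $\int_{t_0}^{\infty}(x^TDx+u^TEu)\,dt$ subject to $\dot x=Mx+Nu$, $x(t_0)=x_0$, $x\in\mathbb{R}^n$, scalar $u$, $D$ diagonal nonnegative (unknown), $E>0$ known. The optimal control is $u=\Theta x$, $\Theta=-E^{-1}N^T\Pi$, with $\Pi$ the stabilizing solution of $M^T\Pi+\Pi M+D-\Pi NE^{-1}N^T\Pi=0$. The cost is $c^T\phi$ with $\phi=(x_1^2,\dots,x_n^2,u^2)^T$, $c=(D_{11},\dots,D_{nn},E)^T$. Hard-constrained IOC method: with $\nabla_x\phi(t)=\begin{bmatrix}2\,\mathrm{diag}(x(t))\\0_{1\times n}\end{bmatrix}$ and $\nabla_u\phi(t)=(0,\dots,0,2u(t))^T$ along the measured trajectories, let $L(t)=\int_t^{\infty}e^{-M^T(t-\tau)}\nabla_x\phi^T(\tau)\,d\tau$ (so that the costate is $p=Lc$), $W_1(t)=\nabla_u\phi^T(t)+N^TL(t)$, $W=\int_{t_0}^{\infty}W_1^T(t)W_1(t)\,dt$;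 the IOC problem is to minimize $c^TWc$ over $c$ with the known component fixed. *)

From HB Require Import structures.
From mathcomp Require Import all_boot all_order all_algebra.
From mathcomp Require Import all_classical all_reals all_analysis.
From mathcomp Require Import complex.
Set Implicit Arguments. Unset Strict Implicit. Unset Printing Implicit Defensive.
Import Order.TTheory GRing.Theory Num.Theory.
Import numFieldNormedType.Exports.
Local Open Scope ring_scope.
Local Open Scope classical_set_scope.

Section IOCDefs.
Variable R : realType.

Definition expmx (n : nat) (A : 'M[R]_n) : 'M[R]_n :=
  \matrix_(i, j) limn (series (fun k : nat => ((A ^+ k) i j / k`!%:R : R)) : R^nat).

(* complex eigenvalues of a real square matrix: eigenvalues (mxalgebra) of
   its embedding into R[i] *)
Definition cplx_mx (n : nat) (A : 'M[R]_n) : 'M[R[i]]_n :=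
  map_mx (fun r : R => (r%:C)%C) A.

Definition hurwitz (n : nat) (A : 'M[R]_n) : Prop :=
  forall z : R[i], eigenvalue (cplx_mx A) z -> complex.Re z < 0.

(* over-damped (second-order) closed loop: all eigenvalues real and distinct,
   i.e. two distinct real eigenvalues for n = 2 *)
Definition overdamped (A : 'M[R]_2) : Prop :=
  exists l1 l2 : R, l1 != l2 /\ eigenvalue A l1 /\ eigenvalue A l2.

(* feature gradients, phi = (x_1^2, ..., x_n^2, u^2) *)
(* transpose of  nabla_x phi = [2 diag(x); 0_{1 x n}]  : an n x (n+1) matrix *)
Definition gradx_phiT (n : nat) (x : 'cV[R]_n) : 'M[R]_(n, n.+1) :=
  \matrix_(i < n, j < n.+1) (if (j : nat) == (i : nat) then 2 * x i 0 else 0).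

(* transpose of nabla_u phi = (0, ..., 0, 2u)^T : a 1 x (n+1) row *)
Definition gradu_phiT (n : nat) (u : R) : 'rV[R]_(n.+1) :=
  \row_(j < n.+1) (if j == ord_max then 2 * u else 0).

Definition int_from (a : R) (f : R -> R) : R :=
  Rintegral lebesgue_measure `[a, +oo[ f.

Definition Lmat (n : nat) (M : 'M[R]_n) (x : R -> 'cV[R]_n) (t : R)
  : 'M[R]_(n, n.+1) :=
  \matrix_(i, j) int_from t
     (fun tau => (expmx (- ((t - tau) *: M^T)) *m gradx_phiT (x tau)) i j).

Definition W1 (n : nat) (M : 'M[R]_n) (N : 'cV[R]_n) (x : R -> 'cV[R]_n)
  (u : R -> R) (t : R) : 'rV[R]_(n.+1) :=
  gradu_phiT n (u t) + N^T *m Lmat M x t.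

Definition Wmat (n : nat) (M : 'M[R]_n) (N : 'cV[R]_n) (x : R -> 'cV[R]_n)
  (u : R -> R) (t0 : R) : 'M[R]_(n.+1) :=
  \matrix_(i, j) int_from t0
     (fun t => ((W1 M N x u t)^T *m W1 M N x u t) i j).

Definition ioc_cost (m : nat) (W : 'M[R]_m) (c : 'cV[R]_m) : R :=
  (c^T *m W *m c) 0 0.

Definition true_weights (n : nat) (D : 'M[R]_n) (E : R) : 'cV[R]_(n.+1) :=
  \col_(j < n.+1) (if unlift ord_max j is Some i then D i i else E).

Definition ioc_minimizer (n : nat) (W : 'M[R]_(n.+1)) (E : R)
  (c : 'cV[R]_(n.+1)) : Prop :=
  c ord_max 0 = E /\
  forall c' : 'cV[R]_(n.+1), c' ord_max 0 = E -> ioc_cost W c <= ioc_cost W c'.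

End IOCDefs.

From HB Require Import structures.
From mathcomp Require Import all_boot all_order all_algebra.
From mathcomp Require Import all_classical all_reals all_analysis.
From mathcomp Require Import complex measurable_realfun ring.
Set Implicit Arguments. Unset Strict Implicit. Unset Printing Implicit Defensive.
Import Order.TTheory GRing.Theory Num.Theory.
Import numFieldNormedType.Exports.
Local Open Scope ring_scope.
Local Open Scope classical_set_scope.

(* Along the single real mode x(t) = e^{lam1 (t - t0)} V1, translation invariance
   of Lebesgue measure gives L(t) = e^{lam1 (t - t0)} L(t0), hence
   W1(t) = e^{lam1 (t - t0)} w for a fixed row w, and W = a w^T w with a >= 0 has
   rank at most one.  The IOC cost is then a (w c)^2, whose minimisers on the
   plane c_3 = E contain a whole line, so one of them differs from the true
   weights.  Since [Rintegral] is total (it is 0 on non-integrable functions),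
   this holds whether or not the integrals converge. *)

Section Rintegral_scale.
Context d (T : measurableType d) (R : realType) (mu : {measure set T -> \bar R}).
Local Open Scope ereal_scope.

Let fine_scaleB (k : R) (P N : \bar R) : (0 <= k)%R -> 0 <= P -> 0 <= N ->
  fine (k%:E * P - k%:E * N) = (k * fine (P - N))%R.
Proof.
move=> k0; have [->|kneq0] := eqVneq k 0%R; first by rewrite !mul0e mul0r sube0.
have kgt0 : (0 < k)%R by rewrite lt0r kneq0.
case: P N => [p| |] [q| |] // _ _ /=; first by rewrite mulrBr.
all: by rewrite gt0_muley ?lte_fin //= mulr0.
Qed.

Let fine_swapB (P N : \bar R) : 0 <= P -> 0 <= N ->
  fine (N - P) = (- fine (P - N))%R.
Proof. by case: P N => [p| |] [q| |] // _ _ /=; rewrite ?oppr0 // opprB. Qed.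

Lemma RintegralZl_mfun (D : set T) (f : T -> R) (k : R) :
  measurable D -> measurable_fun D f ->
  Rintegral mu D (fun x => k * f x)%R = (k * Rintegral mu D f)%R.
Proof.
move=> mD mf; rewrite /Rintegral integralE [in RHS]integralE.
have mfe : measurable_fun D (EFin \o f) by apply/measurable_EFinP.
have mpos := measurable_funepos mfe; have mneg := measurable_funeneg mfe.
have pos0 : forall x, D x -> 0 <= (EFin \o f)^\+ x by move=> x _; exact: funepos_ge0.
have neg0 : forall x, D x -> 0 <= (EFin \o f)^\- x by move=> x _; exact: funeneg_ge0.
have ipos0 := integral_ge0 mu pos0; have ineg0 := integral_ge0 mu neg0.
have -> : (fun x => (k * f x)%:E) = (fun x => k%:E * (EFin \o f) x) by [].
have [k0|/ltW k0] := leP 0%R k.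
  by rewrite ge0_funeposM // ge0_funenegM // !ge0_integralZl_EFin // fine_scaleB.
have Nk0 : (0 <= - k)%R by rewrite oppr_ge0.
rewrite le0_funeposM // le0_funenegM // -EFinN !ge0_integralZl_EFin //.
by rewrite fine_scaleB // fine_swapB // mulrNN.
Qed.

End Rintegral_scale.

Section lebesgue_shift.
Context (R : realType).
Local Notation mu := (@lebesgue_measure R).

Lemma measurable_shift (t : R) : measurable_fun setT (fun x : R => x + t).
Proof. exact: measurable_funD. Qed.

Lemma lebesgue_measure_shift (t : R) (A : set R) : measurable A ->
  pushforward mu (fun x : R => x + t) A = mu A.
Proof.
move=> mA.
unshelve epose proof (@lebesgue_measure_unique R (pushforward
  (T1 := measurableTypeR R) (T2 := measurableTypeR R) mu (fun x => x + t)) _)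
  as shift_unique; first exact: measurable_shift.
- move=> _ [[a b]] _ <- /=; rewrite /pushforward.
  have -> : (fun x => x + t) @^-1` `]a, b] = `]a - t, b - t] :> set R.
    by apply/seteqP; split => x /=; rewrite !in_itv /= ltrBlDr lerBrDr.
  rewrite !lebesgue_measure_itv /= !lte_fin ltrD2r -!EFinD.
  by congr (if _ then _%:E else _); ring.
- exact/esym/shift_unique.
Qed.

Lemma ge0_integral_shift (t : R) (D : set R) (f : R -> \bar R) :
  measurable D -> measurable_fun setT f -> (forall x, (0 <= f x)%E) ->
  (\int[mu]_(x in D) f x =
   \int[mu]_(x in (fun x => (x + t)%R) @^-1` D) f (x + t)%R)%E.
Proof.
move=> mD mf f0.
have mshift : measurable_fun (T := measurableTypeR R) (U := measurableTypeR R)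
  setT (fun x => x + t) by exact: measurable_shift.
rewrite -(ge0_integral_pushforward mshift) //; last exact: measurable_funTS mf.
by apply: eq_measure_integral => A mA _; exact/esym/lebesgue_measure_shift.
Qed.

Lemma Rintegral_shift (t : R) (D : set R) (f : R -> R) :
  measurable D -> measurable_fun setT f ->
  Rintegral mu D f =
  Rintegral mu ((fun x => x + t) @^-1` D) (fun x => f (x + t)).
Proof.
move=> mD mf; rewrite /Rintegral integralE [in RHS]integralE.
have mfe : measurable_fun setT (EFin \o f) by apply/measurable_EFinP.
rewrite (ge0_integral_shift t mD (measurable_funepos mfe)); last exact: funepos_ge0.
rewrite (ge0_integral_shift t mD (measurable_funeneg mfe)); last exact: funeneg_ge0.
by congr (fine (_ - _)); apply: eq_integral => x _; rewrite ?funeposE ?funenegE.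
Qed.

Lemma int_from_shift (a t : R) (f : R -> R) : measurable_fun setT f ->
  int_from (a + t) f = int_from a (fun x => f (x + t)).
Proof.
move=> mf; rewrite /int_from (Rintegral_shift t (measurable_itv _) mf).
congr Rintegral; apply/seteqP; split => x /=; rewrite !in_itv /= !andbT lerD2r //.
Qed.

End lebesgue_shift.

Section expmx_measurable.
Context (R : realType) (n : nat).
Implicit Types A : 'M[R]_n.

Let mx_norm1 A : R := \sum_i \sum_j `|A i j|.

Let mx_norm1_ge_col A j : \sum_i `|A i j| <= mx_norm1 A.
Proof.
apply: ler_sum => i _; rewrite (bigD1 j) //= lerDl.
by apply: sumr_ge0 => ? _; exact: normr_ge0.
Qed.

Let exprn_mx_entry_le A k i j : `|(A ^+ k) i j| <= mx_norm1 A ^+ k.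
Proof.
elim: k i j => [|k IHk] i j.
  by rewrite expr0 mxE; case: (i == j); rewrite ?normr1 ?normr0.
rewrite exprSr mxE; apply: (le_trans (ler_norm_sum _ _ _)).
apply: (@le_trans _ _ (\sum_l mx_norm1 A ^+ k * `|A l j|)).
  apply: ler_sum => l _; rewrite normrM.
  by apply: ler_wpM2r; [exact: normr_ge0|exact: IHk].
rewrite -mulr_sumr exprSr; apply: ler_wpM2l; last exact: mx_norm1_ge_col.
by apply: exprn_ge0; apply: sumr_ge0 => ? _; apply: sumr_ge0 => ? _.
Qed.

Lemma expmx_series_cvg A i j :
  cvgn (series (fun k : nat => (A ^+ k) i j / k`!%:R)).
Proof.
have norm0 : 0 <= mx_norm1 A.
  by apply: sumr_ge0 => ? _; apply: sumr_ge0 => ? _.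
apply: normed_cvg; apply: (@series_le_cvg R _ (exp_coeff (mx_norm1 A))).
- by move=> k /=; exact: normr_ge0.
- by move=> k; rewrite /exp_coeff divr_ge0 // exprn_ge0.
- move=> k /=; rewrite /exp_coeff normrM normfV normr_nat.
  by apply: ler_wpM2r; [rewrite invr_ge0|exact: exprn_mx_entry_le].
- exact: is_cvg_series_exp_coeff.
Qed.

Lemma measurable_exprn_scale_mx A k i j :
  measurable_fun setT (fun s : R => ((s *: A) ^+ k) i j).
Proof.
elim: k i j => [|k IHk] i j.
  by under eq_fun do rewrite expr0; exact: measurable_cst.
under eq_fun do rewrite exprSr mxE.
apply: measurable_sum => l; apply: measurable_funM; first exact: IHk.
by under eq_fun do rewrite mxE; apply: measurable_funM.
Qed.

Lemma measurable_expmx_scale A i j :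
  measurable_fun setT (fun s : R => expmx (s *: A) i j).
Proof.
rewrite /expmx; under eq_fun do rewrite mxE.
apply: (@measurable_fun_cvg _ _ _ setT
  (fun m (s : R) => series (fun k : nat => ((s *: A) ^+ k) i j / k`!%:R) m)).
  move=> m; apply: measurable_sum => k; apply: measurable_funM => //.
  exact: measurable_exprn_scale_mx.
by move=> s _; exact: expmx_series_cvg.
Qed.

End expmx_measurable.

Section single_mode.
Context (R : realType) (n : nat) (M : 'M[R]_n) (N : 'cV[R]_n)
  (Theta : 'rV[R]_n) (V : 'cV[R]_n) (lam t0 : R).

Lemma gradx_phiTZ (e : R) (v : 'cV[R]_n) : gradx_phiT (e *: v) = e *: gradx_phiT v.
Proof. by apply/matrixP => i j; rewrite !mxE; case: eqP; rewrite ?mulr0 // mulrCA. Qed.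

Lemma gradu_phiTZ (e u : R) : gradu_phiT n (e * u) = e *: gradu_phiT n u.
Proof. by apply/matrixP => i j; rewrite !mxE; case: eqP; rewrite ?mulr0 // mulrCA. Qed.

Let mode (t : R) : 'cV[R]_n := expR (lam * (t - t0)) *: V.

Definition mode_Lmat : 'M[R]_(n, n.+1) := \matrix_(i, j) int_from 0
  (fun s => expR (lam * s) * (expmx (s *: M^T) *m gradx_phiT V) i j).

Definition mode_W1 : 'rV[R]_n.+1 :=
  gradu_phiT n ((Theta *m V) 0 0) + N^T *m mode_Lmat.

Let measurable_expR_affine (a b : R) : measurable_fun setT (fun x : R => expR (a * (x - b))).
Proof.
apply: measurableT_comp => //; apply: measurable_funM => //.
exact: measurable_funD.
Qed.

Lemma Lmat_mode t : Lmat M mode t = expR (lam * (t - t0)) *: mode_Lmat.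
Proof.
apply/matrixP => i j; rewrite !mxE.
pose Q s := (expmx (s *: M^T) *m gradx_phiT V) i j.
have mQ : measurable_fun setT Q.
  rewrite /Q; under eq_fun do rewrite mxE.
  apply: measurable_sum => l; apply: measurable_funM => //.
  exact: measurable_expmx_scale.
have -> : (fun tau => (expmx (- ((t - tau) *: M^T)) *m gradx_phiT (mode tau)) i j) =
          (fun tau => expR (lam * (tau - t0)) * Q (tau - t)).
  by apply: funext => tau; rewrite gradx_phiTZ -scalemxAr mxE -scaleNr opprB.
rewrite -[t in int_from t]add0r int_from_shift; last first.
  apply: measurable_funM; first exact: measurable_expR_affine.
  by apply: measurableT_comp mQ _; exact: measurable_funD.
have -> : (fun s => expR (lam * (s + t - t0)) * Q (s + t - t)) =
          (fun s => expR (lam * (t - t0)) * (expR (lam * s) * Q s)).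
  by apply: funext => s; rewrite addrK mulrA -expRD; congr (expR _ * _); ring.
rewrite /int_from RintegralZl_mfun //; apply: measurable_funM => //.
  by apply: measurable_funTS; apply: measurableT_comp => //; exact: measurable_funM.
exact: measurable_funTS mQ.
Qed.

Lemma W1_mode t :
  W1 M N mode (fun tau => (Theta *m mode tau) 0 0) t = expR (lam * (t - t0)) *: mode_W1.
Proof. by rewrite /W1 Lmat_mode -!scalemxAr mxE gradu_phiTZ scalerDr. Qed.

Lemma Wmat_mode : Wmat M N mode (fun tau => (Theta *m mode tau) 0 0) t0 =
  int_from t0 (fun t => expR (lam * (t - t0)) ^+ 2) *: (mode_W1^T *m mode_W1).
Proof.
apply/matrixP => i j; rewrite mxE [RHS]mxE.
under eq_fun do rewrite W1_mode -scalemxAr linearZ /= -scalemxAl scalerA mxE -expr2 mulrC.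
rewrite /int_from [RHS]mulrC RintegralZl_mfun //.
apply: measurable_funTS; apply: measurable_funX.
exact: measurable_expR_affine.
Qed.

End single_mode.

Section rank_one_ioc.
Context (R : realType) (n : nat) (a E : R) (w : 'rV[R]_n.+1).
Hypothesis a_ge0 : 0 <= a.
Implicit Types c d : 'cV[R]_n.+1.
Local Notation W := (a *: (w^T *m w)).
Local Notation wc c := ((w *m c) 0 0).
Local Notation e_ j := (delta_mx j 0 : 'cV[R]_n.+1).

Lemma ioc_cost_rank_one c : ioc_cost W c = a * wc c ^+ 2.
Proof.
rewrite /ioc_cost -scalemxAr -scalemxAl mxE mulmxA -trmx_mul -mulmxA.
by rewrite [X in a * X]mxE big_ord1 mxE expr2.
Qed.

Lemma ioc_minimizer_rank_one c : c ord_max 0 = E ->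
  (forall c', c' ord_max 0 = E -> wc c ^+ 2 <= wc c' ^+ 2) -> ioc_minimizer W E c.
Proof.
move=> cE c_min; split=> // c' c'E; rewrite !ioc_cost_rank_one.
exact/ler_wpM2l/c_min.
Qed.

Lemma ioc_minimizerD_kernel c d : ioc_minimizer W E c ->
  d ord_max 0 = 0 -> w *m d = 0 -> ioc_minimizer W E (c + d).
Proof.
move=> [cE c_min] d0 wd0; split=> [|c' c'E]; first by rewrite mxE cE d0 addr0.
by rewrite ioc_cost_rank_one mulmxDr wd0 addr0 -ioc_cost_rank_one; exact: c_min.
Qed.

Lemma mulmx_delta_mx (j : 'I_n.+1) : w *m e_ j = (w 0 j)%:M.
Proof.
apply/matrixP => i k; rewrite !ord1 !mxE (bigD1 j) //= mxE !eqxx mulr1 big1 ?addr0 // => l lj.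
by rewrite mxE (negbTE lj) mulr0.
Qed.

Lemma exists_ioc_minimizer_rank_one : exists c, ioc_minimizer W E c.
Proof.
have eE : (E *: e_ ord_max) ord_max 0 = E by rewrite !mxE !eqxx mulr1.
have [[j /andP[j_max wj0]]|w_max] :=
  pselect (exists j, (j != ord_max) && (w 0 j != 0)).
  exists (E *: e_ ord_max - (w 0 ord_max * E / w 0 j) *: e_ j).
  apply: ioc_minimizer_rank_one => [|c' _].
    by rewrite !mxE eqxx eq_sym (negbTE j_max) /= mulr1 mulr0 subr0.
  have -> : wc (E *: e_ ord_max - (w 0 ord_max * E / w 0 j) *: e_ j) = 0.
    by rewrite mulmxBr -!scalemxAr !mulmx_delta_mx !mxE eqxx /=; field.
  by rewrite expr0n /= sqr_ge0.
exists (E *: e_ ord_max); apply: ioc_minimizer_rank_one => // c' c'E.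
suff wcE c : c ord_max 0 = E -> wc c = w 0 ord_max * E by rewrite !wcE.
move=> cE; rewrite mxE (bigD1 ord_max) //= cE big1 ?addr0 // => k k_max.
have /eqP -> : w 0 k == 0 by apply/negPn/negP => wk0; apply: w_max; exists k; rewrite k_max.
by rewrite mul0r.
Qed.

Lemma exists_kernel_direction (i j : 'I_n.+1) :
  i != j -> i != ord_max -> j != ord_max ->
  exists d, [/\ d != 0, d ord_max 0 = 0 & w *m d = 0].
Proof.
move=> ij i_max j_max.
have [wi0|wi_neq0] := eqVneq (w 0 i) 0.
  exists (e_ i); split.
  - by apply/negP => /eqP/matrixP/(_ i 0); rewrite !mxE !eqxx => /eqP; rewrite oner_eq0.
  - by rewrite mxE eq_sym (negbTE i_max).
  - by rewrite mulmx_delta_mx wi0 raddf0.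
exists (w 0 j *: e_ i - w 0 i *: e_ j); split.
- apply/negP => /eqP/matrixP/(_ j 0); rewrite !mxE eq_sym (negbTE ij) !eqxx /=.
  by rewrite mulr0 mulr1 sub0r => /eqP; rewrite oppr_eq0 (negbTE wi_neq0).
- by rewrite !mxE eq_sym (negbTE i_max) eq_sym (negbTE j_max) !mulr0 subr0.
- rewrite mulmxBr -!scalemxAr !mulmx_delta_mx.
  by apply/matrixP => p q; rewrite !mxE; ring.
Qed.

Lemma exists_ioc_minimizer_neq (i j : 'I_n.+1) c0 :
  i != j -> i != ord_max -> j != ord_max ->
  exists c, ioc_minimizer W E c /\ c <> c0.
Proof.
move=> ij i_max j_max.
have [c c_min] := exists_ioc_minimizer_rank_one.
have [d [d_neq0 d_max wd0]] := exists_kernel_direction ij i_max j_max.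
have [cc0|/eqP cc0] := eqVneq c c0; last by exists c.
exists (c + d); split; first exact: ioc_minimizerD_kernel.
rewrite -cc0 -[X in _ <> X]addr0 => /addrI d0.
by rewrite d0 eqxx in d_neq0.
Qed.

End rank_one_ioc.

Theorem lemma2 (R : realType) (M : 'M[R]_2) (N : 'cV[R]_2) (D : 'M[R]_2)
  (E : R) (Pi : 'M[R]_2) (lam1 : R) (V1 : 'cV[R]_2) (t0 : R) :
  is_diag_mx D -> (forall i, 0 <= D i i) -> 0 < E ->
  let Theta : 'rV[R]_2 := - (E^-1 *: (N^T *m Pi)) in
  (* Pi is the stabilizing solution of the algebraic Riccati equation *)
  Pi^T = Pi ->
  M^T *m Pi + Pi *m M + D - E^-1 *: (Pi *m N *m N^T *m Pi) = 0 ->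
  hurwitz (M + N *m Theta) ->
  (* the optimal closed loop is over-damped *)
  overdamped (M + N *m Theta) ->
  (* lam1 is a real eigenvalue of M + N Theta with right eigenvector V1 *)
  V1 != 0 -> (M + N *m Theta) *m V1 = lam1 *: V1 ->
  (* every eigenvalue of lam1 I + M has negative real part *)
  hurwitz (lam1%:M + M) ->
  (* closed loop initialised at the real mode: x(t0) = V1 *)
  let x : R -> 'cV[R]_2 := fun t => expR (lam1 * (t - t0)) *: V1 in
  let u : R -> R := fun t => (Theta *m x t) 0 0 in
  let W := Wmat M N x u t0 in
  (* the IOC problem does not converge to the true weights: it has a
     minimiser different from the true weights *)
  exists c : 'cV[R]_3, ioc_minimizer W E c /\ c <> true_weights D E.
Proof.
move=> _ _ _ Theta _ _ _ _ _ _ _ x u W.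
have -> : W = int_from t0 (fun t => expR (lam1 * (t - t0)) ^+ 2) *:
    ((mode_W1 M N Theta V1 lam1)^T *m mode_W1 M N Theta V1 lam1).
  exact: Wmat_mode.
have a_ge0 : 0 <= int_from t0 (fun t => expR (lam1 * (t - t0)) ^+ 2).
  by apply: Rintegral_ge0 => t _; exact: sqr_ge0.
by apply: (exists_ioc_minimizer_neq _ _ a_ge0 (i := 0) (j := 1)).
Qed.
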